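(* Consider the Kakutani interval splitting process with cutoff $x_c\in(0,1)$: start with $(0,1)$; at each step the current largest subinterval is split into two pieces by a division point uniformly distributed in it (independently of the past); subintervals of length at most $x_c$ are not split further, and the process stops when all subintervals have length at most $x_c$; let $n$ be the total number of splits. Fix $y\in(0,1)$ and let $K$ be the number of splits, during the process, of a subinterval containing the point $y$ (the ''$y$-subintervals'') before the subinterval containing $y$ has length at most $x_c$. Then, with high probability, $K=\sim\!\log n$, i.e. $K$ is at most of order $\log n$ (equivalently of order $\log(1/x_c)$): for every $A>0$ there is a constant $C_A$ such that $K\le C_A\log(1/x_c)$ except on an event of probability at most of order $x_c^{A}$.
   Context: The process ends with $n+1$ subintervals all of length at most $x_c$, and $1/x_c$ is of the same order as $n$ (up to constants), so $\log n$ and $\log(1/x_c)$ are comparable; asymptotics are as $x_c\to0$. *)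

From HB Require Import structures.
From mathcomp Require Import all_boot all_order all_algebra.
From mathcomp Require Import all_classical all_reals all_analysis.
Set Implicit Arguments. Unset Strict Implicit. Unset Printing Implicit Defensive.
Import Order.TTheory GRing.Theory Num.Theory.
Local Open Scope classical_set_scope.
Local Open Scope ring_scope.

Section Kakutani.
Variable R : realType.

Definition ilen (I : R * R) : R := I.2 - I.1.

(* Index of the largest subinterval of length > xc (the first one among
   ties, which occur with probability 0); None if every subinterval has
   length <= xc, i.e. the process has stopped. *)
Definition largest (xc : R) (s : seq (R * R)) : option nat :=
  foldl (fun (cur : option nat) (i : nat) =>
    if xc < ilen (nth (0,0) s i) then
      match cur with
      | None => Some i
      | Some j => if ilen (nth (0,0) s j) < ilen (nth (0,0) s i)
                  then Some i else Some j
      end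
    else cur) None (iota 0 (size s)).

(* After the stopping time the configuration no longer changes. *)
Definition kstep (xc : R) (s : seq (R * R)) (u : R) : seq (R * R) :=
  match largest xc s with
  | None => s
  | Some i =>
      let I := nth (0,0) s i in
      let c := I.1 + u * (I.2 - I.1) in
      take i s ++ [:: (I.1, c); (c, I.2)] ++ drop i.+1 s
  end.

Definition splits_y (xc y : R) (s : seq (R * R)) : bool :=
  match largest xc s with
  | None => false
  | Some i => let I := nth (0,0) s i in (I.1 < y) && (y < I.2)
  end.

Fixpoint kconfig (xc : R) (u : nat -> R) (n : nat) : seq (R * R) :=
  match n with
  | 0 => [:: (0, 1)]
  | n.+1 => kstep xc (kconfig xc u n) (u n)
  end.

(* Number of splits of y-subintervals among the first N steps.  K itself is
   the (nondecreasing) limit of K_N as N -> oo. *)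
Definition Ky (xc y : R) (u : nat -> R) (N : nat) : nat :=
  \sum_(i < N) splits_y xc y (kconfig xc u i).

Definition mutually_independent {d} {T : measurableType d}
  (P : probability T R) (X : nat -> T -> R) : Prop :=
  forall (s : seq nat) (B : nat -> set R), uniq s ->
    (forall i, i \in s -> measurable (B i)) ->
    P (\big[setI/setT]_(i <- s) (X i @^-1` B i)) =
    (\prod_(i <- s) P (X i @^-1` B i))%E.

Definition uniform01 {d} {T : measurableType d}
  (P : probability T R) (X : T -> R) : Prop :=
  forall B : set R, measurable B -> P (X @^-1` B) = uniform_prob (@ltr01 R) B.

End Kakutani.

From HB Require Import structures.
From mathcomp Require Import all_boot all_order all_algebra.
From mathcomp Require Import all_classical all_reals all_analysis.
From mathcomp Require Import measurable_realfun ring lra zify.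
Set Implicit Arguments. Unset Strict Implicit. Unset Printing Implicit Defensive.
Import Order.TTheory GRing.Theory Num.Theory.
Local Open Scope classical_set_scope.
Local Open Scope ring_scope.

(* Call a split of the subinterval containing y balanced when its uniform variable lies
   in [1/4, 3/4]: both pieces are then at most 3/4 as long.  Since only subintervals
   longer than xc are split, if K > n then among the first n y-splits, s of which are
   balanced, we get xc < (3/4)^s.  With f the number of unbalanced ones among the first
   n y-splits, the process (3/4)^s (7/8)^(n - s - f) is a martingale: at each counted
   y-split it is multiplied by 6/7 or by 8/7, with probability 1/2 each, independently
   of the past.  Its mean is therefore (7/8)^n, and Markov's inequality gives
   P(K > n) <= (7/8)^n / xc, which is at most (8/7) xc^A once
   n + 1 > (A + 1) ln(1/xc) / ln(8/7). *)

(** * Shrinking of the y-subinterval *)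

Section YSubinterval.
Variables (R : realType) (xc y : R).

Definition balanced (v : R) : bool := (4^-1 <= v) && (v <= 3/4).
Definition has_y (J : R * R) : bool := (J.1 < y) && (y < J.2).

Lemma largest_Some s i : largest xc s = Some i ->
  (i < size s)%N /\ xc < ilen (nth (0,0) s i).
Proof.
rewrite /largest.
have : forall j, j \in iota 0 (size s) -> (j < size s)%N by move=> j; rewrite mem_iota.
have : forall i, (None : option nat) = Some i ->
  (i < size s)%N /\ xc < ilen (nth (0,0) s i) by [].
elim: (iota 0 (size s)) (None : option nat) => [|a l IH] cur cur_ok l_small //=.
  exact: cur_ok.
apply: IH => [k|j jl]; last by apply: l_small; rewrite inE jl orbT.
case: ifPn => ha; last exact: cur_ok.
have ? : (a < size s)%N by apply: l_small; rewrite inE eqxx.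
case: cur cur_ok => [j|] cur_ok; last by case=> <-.
by case: ifPn => _ [<-] //; apply: cur_ok.
Qed.

Definition pieces (I : R * R) (v : R) : seq (R * R) :=
  let c := I.1 + v * (I.2 - I.1) in [:: (I.1, c); (c, I.2)].

Lemma kstep_Some s v i : largest xc s = Some i ->
  kstep xc s v = take i s ++ pieces (nth (0,0) s i) v ++ drop i.+1 s.
Proof. by rewrite /kstep => ->. Qed.

Lemma splits_y_Some s i : largest xc s = Some i ->
  splits_y xc y s = has_y (nth (0,0) s i).
Proof. by rewrite /splits_y => ->. Qed.

Section Pieces.
Variables (I : R * R) (v : R).
Hypotheses (I12 : I.1 <= I.2) (v01 : 0 <= v <= 1).

Lemma ilen_pieces J : J \in pieces I v ->
  ilen J <= (if balanced v then 3/4 else 1) * ilen I.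
Proof.
have [v0 v1] := andP v01; rewrite /ilen /balanced.
move: I12; case: I => a b /= ab.
by rewrite !inE => /orP[]/eqP->/=; case: ifP => [/andP[va vb]|_]; nra.
Qed.

Lemma count_has_y_pieces : (count has_y (pieces I v) <= has_y I)%N.
Proof.
have [v0 v1] := andP v01; move: I12; case: I => a b /= ab.
have c1 : a <= a + v * (b - a) by nra.
have c2 : a + v * (b - a) <= b by nra.
rewrite /has_y /=; move: (a + _) c1 c2 => c c1 c2.
by case: (ltrP a y); case: (ltrP y c); case: (ltrP c y); case: (ltrP y b);
  rewrite //=; lra.
Qed.

End Pieces.

Variables (n : nat) (u : nat -> R).

(* [(tally t).1] and [(tally t).2] count the balanced and the unbalanced splits
   among the first [n] y-splits performed before time [t]. *)
Fixpoint tally (t : nat) : nat * nat :=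
  if t is t'.+1 then
    let p := tally t' in
    if splits_y xc y (kconfig xc u t') && (p.1 + p.2 < n)%N then
      (if balanced (u t') then (p.1.+1, p.2) else (p.1, p.2.+1))
    else p
  else (0, 0)%N.

Lemma KyS t : Ky xc y u t.+1 = (Ky xc y u t + splits_y xc y (kconfig xc u t))%N.
Proof. by rewrite /Ky big_ord_recr. Qed.

Lemma tally_sum t : ((tally t).1 + (tally t).2 = minn (Ky xc y u t) n)%N.
Proof.
elim: t => [|t IH] /=; first by rewrite /Ky big_ord0 min0n.
rewrite KyS; case: splits_y => /=; last by rewrite addn0.
by rewrite IH; case: ifP => h; [case: ifP => _ /=|]; lia.
Qed.

Definition y_shrunk t :=
  (forall J, J \in kconfig xc u t -> has_y J -> ilen J <= (3/4) ^+ (tally t).1)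
  /\ (count has_y (kconfig xc u t) <= 1)%N.

Lemma y_shrunkS t : 0 < xc -> 0 <= u t <= 1 -> y_shrunk t -> y_shrunk t.+1.
Proof.
move=> xc0 ut [lenB cnt1]; rewrite /y_shrunk /=.
case E: (largest xc (kconfig xc u t)) => [i|]; last by rewrite /kstep /splits_y E.
rewrite (kstep_Some _ E) (splits_y_Some E).
have [isz hI] := largest_Some E.
set s := kconfig xc u t in lenB cnt1 isz hI *.
set I := nth (0,0) s i in hI *.
have sE : s = take i s ++ I :: drop i.+1 s by rewrite -drop_nth // cat_take_drop.
have I12 : I.1 <= I.2 by rewrite -subr_ge0; exact/ltW/(lt_trans xc0 hI).
have cntI := count_has_y_pieces I12 ut.
have cnt_s : count has_y s =
    (count has_y (take i s) + has_y I + count has_y (drop i.+1 s))%N.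
  by rewrite {1}sE count_cat /= addnA.
have rest_y J : J \in take i s ++ drop i.+1 s -> has_y J -> ~~ has_y I /\ J \in s.
  move=> JR yJ; split.
    have : (0 < count has_y (take i s ++ drop i.+1 s))%N.
      by rewrite -has_count; apply/hasP; exists J.
    by rewrite count_cat; move: cnt1; rewrite cnt_s; case: (has_y I) => /=; lia.
  by rewrite sE mem_cat inE; move: JR; rewrite mem_cat => /orP[]->; rewrite ?orbT.
split; last by rewrite !count_cat; move: cnt1; rewrite cnt_s; lia.
move=> J; rewrite !mem_cat orbCA => /orP[Jpieces|JR] yJ; last first.
  by rewrite -mem_cat in JR; have [/negbTE-> Js] := rest_y J JR yJ; exact: lenB.
have yI : has_y I.
  have : (0 < count has_y (pieces I (u t)))%N by rewrite -has_count; apply/hasP; exists J.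
  by move: cntI; case: (has_y I) => //=; lia.
have lenI : ilen I <= (3/4) ^+ (tally t).1 by apply: lenB => //; exact: mem_nth.
have := ilen_pieces I12 ut Jpieces; rewrite yI /=.
by case: (_ < n)%N; case: balanced; rewrite /= ?exprS; lra.
Qed.

Lemma y_shrunk_all t : 0 < xc -> (forall i, (i < t)%N -> 0 <= u i <= 1) ->
  y_shrunk t.
Proof.
move=> xc0; elim: t => [|t IH] u01.
  by split=> [J|/=]; [rewrite inE => /eqP-> _; rewrite /ilen subr0|case: has_y].
by apply: y_shrunkS => //; [exact: u01|apply: IH => i ?; apply: u01; lia].
Qed.

Lemma tally_full t : 0 < xc -> (forall i, (i < t)%N -> 0 <= u i <= 1) ->
  (n < Ky xc y u t)%N ->
  ((tally t).1 + (tally t).2 = n)%N /\ xc < (3/4) ^+ (tally t).1.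
Proof.
move=> xc0; elim: t => [|t IH] u01; first by rewrite /Ky big_ord0.
have u01' i : (i < t)%N -> 0 <= u i <= 1 by move=> ?; apply: u01; lia.
move=> Kt; have sum_n : ((tally t.+1).1 + (tally t.+1).2 = n)%N.
  by rewrite tally_sum; apply/minn_idPr; exact: ltnW.
split=> //=.
case: (ltnP n (Ky xc y u t)) => Kt'.
  by have [sum_t ?] := IH u01' Kt'; rewrite sum_t ltnn andbF.
move: Kt; rewrite KyS.
case E: (largest xc (kconfig xc u t)) => [i|]; last by rewrite /splits_y E; lia.
rewrite (splits_y_Some E); case yI: has_y => /= Kt; last lia.
rewrite tally_sum.
have -> : minn (Ky xc y u t) n = n by apply/minn_idPr; lia.
rewrite ltnn.
have [isz hI] := largest_Some E.
apply: (lt_le_trans hI); have [lenB _] := y_shrunk_all xc0 u01'.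
by apply: lenB => //; exact: mem_nth.
Qed.

End YSubinterval.

(** * Measurability of the process *)

(* Countably-valued random variables (the index [largest], the counters [tally],
   boolean flags) are handled through their fibres. *)
Section MeasurableFibres.
Context {d : measure_display} {T : measurableType d}.

Definition measurable_fibres {X : Type} (f : T -> X) :=
  forall x, measurable (f @^-1` [set x]).

Lemma measurableT_preimage (d' : measure_display) (Y : sigmaRingType d') (f : T -> Y)
    (B : set Y) :
  measurable_fun setT f -> measurable B -> measurable (f @^-1` B).
Proof. by move=> mf mB; rewrite -[_ @^-1` _]setTI; exact: mf. Qed.

Lemma measurable_select_preimage (X : countType) (Y : Type) (a : T -> X)
    (g : X -> T -> Y) (B : set Y) :
  measurable_fibres a -> (forall x, measurable (g x @^-1` B)) ->
  measurable ((fun w => g (a w) w) @^-1` B).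
Proof.
move=> ma mg.
have -> : (fun w => g (a w) w) @^-1` B = \bigcup_k
    (if unpickle k is Some x then a @^-1` [set x] `&` g x @^-1` B else set0).
  apply/seteqP; split=> w /=.
    by move=> Bw; exists (pickle (a w)) => //; rewrite pickleK.
  by case=> k _; case: unpickle => // x [/= ->].
by apply: bigcupT_measurable => k; case: unpickle => // x; exact: measurableI.
Qed.

Lemma measurable_fibres_select (X : countType) (Y : Type) (a : T -> X)
    (g : X -> T -> Y) :
  measurable_fibres a -> (forall x, measurable_fibres (g x)) ->
  measurable_fibres (fun w => g (a w) w).
Proof. by move=> ma mg z; apply: measurable_select_preimage => // x; exact: mg. Qed.

Lemma measurable_fun_select (X : countType) (d' : measure_display)
    (Y : sigmaRingType d') (a : T -> X) (g : X -> T -> Y) :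
  measurable_fibres a -> (forall x, measurable_fun setT (g x)) ->
  measurable_fun setT (fun w => g (a w) w).
Proof.
move=> ma mg _ B mB; rewrite setTI; apply: measurable_select_preimage => // x.
exact: measurableT_preimage.
Qed.

Lemma measurable_fibres_cst (X : Type) (x : X) : measurable_fibres (cst x).
Proof. by move=> z; rewrite preimage_cst; case: ifP. Qed.

Lemma measurable_fibres_comp (X : countType) (Y : Type) (f : X -> Y) (a : T -> X) :
  measurable_fibres a -> measurable_fibres (fun w => f (a w)).
Proof.
move=> ma; apply: (measurable_fibres_select (g := fun x _ => f x)) => // x.
exact: measurable_fibres_cst.
Qed.

Lemma measurable_fun_comp_fibres (X : countType) (d' : measure_display)
    (Y : sigmaRingType d') (f : X -> Y) (a : T -> X) :
  measurable_fibres a -> measurable_fun setT (fun w => f (a w)).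
Proof. by move=> ma; apply: (measurable_fun_select (g := fun x _ => f x)). Qed.

Lemma measurable_fibres_pair (X Y : Type) (f : T -> X) (g : T -> Y) :
  measurable_fibres f -> measurable_fibres g -> measurable_fibres (fun w => (f w, g w)).
Proof.
move=> mf mg [x z]; rewrite (_ : _ @^-1` _ = f @^-1` [set x] `&` g @^-1` [set z]).
  exact: measurableI.
by apply/seteqP; split=> w /=; [case=> -> ->|case=> -> ->].
Qed.

Lemma measurable_fibres_ltr (R : realType) (f g : T -> R) :
  measurable_fun setT f -> measurable_fun setT g ->
  measurable_fibres (fun w => f w < g w).
Proof.
move=> mf mg b; rewrite -[_ @^-1` _]setTI.
exact: measurable_fun_ltr mf mg measurableT _ _.
Qed.

Lemma measurable_fibres_ler (R : realType) (f g : T -> R) :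
  measurable_fun setT f -> measurable_fun setT g ->
  measurable_fibres (fun w => f w <= g w).
Proof.
move=> mf mg; under [fun w => _]funext do rewrite leNgt.
exact/(measurable_fibres_comp negb)/measurable_fibres_ltr.
Qed.

End MeasurableFibres.

Section MeasurableSeqFun.
Context {d d' : measure_display} {T : measurableType d} {Y : measurableType d'}.
Variable y0 : Y.

Definition measurable_seqfun (s : T -> seq Y) :=
  (forall j, measurable_fun setT (fun w => nth y0 (s w) j)) /\
  measurable_fibres (fun w => size (s w)).

Lemma measurable_seqfun_select (X : countType) (a : T -> X) (g : X -> T -> seq Y) :
  measurable_fibres a -> (forall x, measurable_seqfun (g x)) ->
  measurable_seqfun (fun w => g (a w) w).
Proof.
move=> ma mg; split=> [j|].
  by apply: (measurable_fun_select (g := fun x w => nth y0 (g x w) j)) => // x;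
    case: (mg x).
by apply: (measurable_fibres_select (g := fun x w => size (g x w))) => // x;
  case: (mg x).
Qed.

Lemma measurable_seqfun_nil : measurable_seqfun (fun _ => [::]).
Proof. by split=> [j|]; [exact: measurable_cst|exact: measurable_fibres_cst]. Qed.

Lemma measurable_seqfun_cons (f : T -> Y) (s : T -> seq Y) :
  measurable_fun setT f -> measurable_seqfun s ->
  measurable_seqfun (fun w => f w :: s w).
Proof.
move=> mf [ms msz]; split=> [[|j]|] /=; [exact: mf|exact: ms|].
exact: (measurable_fibres_comp succn msz).
Qed.

Lemma measurable_seqfun_cat (s1 s2 : T -> seq Y) :
  measurable_seqfun s1 -> measurable_seqfun s2 ->
  measurable_seqfun (fun w => s1 w ++ s2 w).
Proof.
move=> [m1 sz1] [m2 sz2]; split=> [j|].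
  under [fun w => _]funext do rewrite nth_cat.
  apply: (measurable_fun_select (a := fun w => size (s1 w))
    (g := fun k w => if (j < k)%N then nth y0 (s1 w) j else nth y0 (s2 w) (j - k))) => // k.
  by case: (j < k)%N; [exact: m1|exact: m2].
under [fun w => _]funext do rewrite size_cat.
exact: (measurable_fibres_comp (fun p => p.1 + p.2)%N (measurable_fibres_pair sz1 sz2)).
Qed.

Lemma measurable_seqfun_take (i : nat) (s : T -> seq Y) :
  measurable_seqfun s -> measurable_seqfun (fun w => take i (s w)).
Proof.
move=> [ms msz]; split=> [j|].
  have nthE w : nth y0 (take i (s w)) j = if (j < i)%N then nth y0 (s w) j else y0.
    case: ltnP => ji; first exact: nth_take.
    by rewrite nth_default // size_take_min (leq_trans (geq_minl _ _)).
  under [fun w => _]funext do rewrite nthE.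
  by case: (j < i)%N; [exact: ms|exact: measurable_cst].
under [fun w => _]funext do rewrite size_take_min.
exact: (measurable_fibres_comp (minn i) msz).
Qed.

Lemma measurable_seqfun_drop (i : nat) (s : T -> seq Y) :
  measurable_seqfun s -> measurable_seqfun (fun w => drop i (s w)).
Proof.
move=> [ms msz]; split=> [j|].
  by under [fun w => _]funext do rewrite nth_drop; exact: ms.
under [fun w => _]funext do rewrite size_drop.
exact: (measurable_fibres_comp (subn^~ i) msz).
Qed.

End MeasurableSeqFun.

Section ProcessMeasurability.
Variables (R : realType) (d : measure_display) (T : measurableType d) (xc y : R).

Local Notation measurable_config := (measurable_seqfun ((0, 0) : R * R)).

Lemma measurable_ilen (I : T -> R * R) :
  measurable_fun setT I -> measurable_fun setT (fun w => ilen (I w)).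
Proof.
move=> mI; apply: measurable_funB; first exact: measurableT_comp measurable_snd mI.
exact: measurableT_comp measurable_fst mI.
Qed.

Lemma measurable_pieces (I : T -> R * R) (v : T -> R) :
  measurable_fun setT I -> measurable_fun setT v ->
  measurable_config (fun w => pieces (I w) (v w)).
Proof.
move=> mI mv.
have m1 := measurableT_comp measurable_fst mI.
have m2 := measurableT_comp measurable_snd mI.
have mc : measurable_fun setT (fun w => (I w).1 + v w * ((I w).2 - (I w).1)).
  by apply: measurable_funD => //; apply: measurable_funM => //; exact: measurable_funB.
apply: measurable_seqfun_cons; first exact: measurable_fun_pair.
apply: measurable_seqfun_cons; first exact: measurable_fun_pair.
exact: measurable_seqfun_nil.
Qed.

Lemma measurable_largest (s : T -> seq (R * R)) :
  measurable_config s -> measurable_fibres (fun w => largest xc (s w)).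
Proof.
move=> [ms msz].
pose len w i := ilen (nth (0, 0) (s w) i).
have mlen i : measurable_fun setT (len^~ i) by exact: measurable_ilen.
pose F w (cur : option nat) (i : nat) :=
  if xc < len w i then
    match cur with
    | None => Some i
    | Some j => if len w j < len w i then Some i else Some j
    end
  else cur.
have stepF cur i : measurable_fibres cur -> measurable_fibres (fun w => F w (cur w) i).
  move=> mcur.
  apply: (measurable_fibres_select (a := cur) (g := fun o w => F w o i)) => // -[j|].
    apply: (measurable_fibres_comp (fun b : bool * bool =>
      if b.1 then (if b.2 then Some i else Some j) else Some j)
      (a := fun w => (xc < len w i, len w j < len w i))).
    by apply: measurable_fibres_pair; apply: measurable_fibres_ltr => //;
      exact: measurable_cst.
  apply: (measurable_fibres_comp (fun b : bool => if b then Some i else None)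
    (a := fun w => xc < len w i)).
  by apply: measurable_fibres_ltr => //; exact: measurable_cst.
have foldF l cur : measurable_fibres cur ->
    measurable_fibres (fun w => foldl (F w) (cur w) l).
  by elim: l cur => [|i l IH] cur mcur //=; apply/IH/stepF.
apply: (measurable_fibres_select (a := fun w => size (s w))
  (g := fun k w => foldl (F w) None (iota 0 k))) => // k.
exact: foldF (measurable_fibres_cst None).
Qed.

Lemma measurable_kstep (s : T -> seq (R * R)) (v : T -> R) :
  measurable_config s -> measurable_fun setT v ->
  measurable_config (fun w => kstep xc (s w) (v w)).
Proof.
move=> ms mv; apply: (measurable_seqfun_select (a := fun w => largest xc (s w))
  (g := fun o w => if o is Some i then
     take i (s w) ++ pieces (nth (0, 0) (s w) i) (v w) ++ drop i.+1 (s w) else s w)).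
  exact: measurable_largest.
case=> [i|] //; apply: measurable_seqfun_cat; first exact: measurable_seqfun_take.
apply: measurable_seqfun_cat; last exact: measurable_seqfun_drop.
by apply: measurable_pieces => //; case: ms.
Qed.

Lemma measurable_splits_y (s : T -> seq (R * R)) :
  measurable_config s -> measurable_fibres (fun w => splits_y xc y (s w)).
Proof.
move=> ms; apply: (measurable_fibres_select (a := fun w => largest xc (s w))
  (g := fun o w => if o is Some i then has_y y (nth (0, 0) (s w) i) else false)).
  exact: measurable_largest.
case=> [i|]; last exact: measurable_fibres_cst.
have [mnth _] := ms.
apply: (measurable_fibres_comp (fun b : bool * bool => b.1 && b.2)
  (a := fun w => ((nth (0, 0) (s w) i).1 < y, y < (nth (0, 0) (s w) i).2))).
apply: measurable_fibres_pair; apply: measurable_fibres_ltr; try exact: measurable_cst.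
  exact: measurableT_comp measurable_fst (mnth i).
exact: measurableT_comp measurable_snd (mnth i).
Qed.

Lemma measurable_balanced (v : T -> R) :
  measurable_fun setT v -> measurable_fibres (fun w => balanced (v w)).
Proof.
move=> mv; apply: (measurable_fibres_comp (fun b : bool * bool => b.1 && b.2)
  (a := fun w => (4^-1 <= v w, v w <= 3/4))).
by apply: measurable_fibres_pair; apply: measurable_fibres_ler => //; exact: measurable_cst.
Qed.

Variables (V : nat -> T -> R) (n : nat).

Lemma measurable_kconfig t : (forall i, (i < t)%N -> measurable_fun setT (V i)) ->
  measurable_config (fun w => kconfig xc (fun i => V i w) t).
Proof.
elim: t => [|t IH] mV /=.
  by apply: measurable_seqfun_cons; [exact: measurable_cst|exact: measurable_seqfun_nil].
by apply: measurable_kstep; [apply: IH => i ?; apply: mV; lia|exact: mV].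
Qed.

Lemma measurable_Ky t : (forall i, (i < t)%N -> measurable_fun setT (V i)) ->
  measurable_fibres (fun w => Ky xc y (fun i => V i w) t).
Proof.
elim: t => [|t IH] mV.
  rewrite /Ky; under [fun w => _]funext do rewrite big_ord0.
  exact: measurable_fibres_cst.
have mV' i : (i < t)%N -> measurable_fun setT (V i) by move=> ?; apply: mV; lia.
under [fun w => _]funext do rewrite KyS.
exact: (measurable_fibres_comp (fun p : nat * bool => p.1 + p.2)%N
  (measurable_fibres_pair (IH mV') (measurable_splits_y (measurable_kconfig mV')))).
Qed.

Lemma measurable_tally t : (forall i, (i < t)%N -> measurable_fun setT (V i)) ->
  measurable_fibres (fun w => tally xc y n (fun i => V i w) t).
Proof.
elim: t => [|t IH] mV; first exact: measurable_fibres_cst.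
have mV' i : (i < t)%N -> measurable_fun setT (V i) by move=> ?; apply: mV; lia.
pose f (q : nat * nat * bool * bool) :=
  let: (p, ys, bal) := q in
  if ys && (p.1 + p.2 < n)%N then
    (if bal then (p.1.+1, p.2) else (p.1, p.2.+1)) else p.
apply: (measurable_fibres_comp f (a := fun w =>
  (tally xc y n (fun i => V i w) t, splits_y xc y (kconfig xc (fun i => V i w) t),
   balanced (V t w)))).
apply: measurable_fibres_pair; last by apply: measurable_balanced; exact: mV.
exact: measurable_fibres_pair (IH mV') (measurable_splits_y (measurable_kconfig mV')).
Qed.

Definition state t w :=
  (tally xc y n (fun i => V i w) t, splits_y xc y (kconfig xc (fun i => V i w) t)).

Lemma measurable_fibres_state t : (forall i, (i < t)%N -> measurable_fun setT (V i)) ->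
  measurable_fibres (state t).
Proof.
move=> mV; apply: measurable_fibres_pair; first exact: measurable_tally.
exact/measurable_splits_y/measurable_kconfig.
Qed.

End ProcessMeasurability.

(** * Independence from the past *)

Lemma in_bigsetI (T : Type) (I : eqType) (s : seq I) (F : I -> set T) (w : T) :
  (\big[setI/setT]_(i <- s) F i) w <-> (forall i, i \in s -> F i w).
Proof.
elim: s => [|a s IH]; first by rewrite big_nil.
rewrite big_cons; split.
  by move=> [Faw /IH Fsw] i; rewrite inE => /predU1P[->|]; [exact: Faw|exact: Fsw].
by move=> Fw; split; [apply: Fw; exact: mem_head|apply/IH => i si; apply/Fw/mem_behead].
Qed.

Lemma big_iotaSr (T : Type) (idx : T) (op : Monoid.law idx) (F : nat -> T) (t : nat) :
  \big[op/idx]_(i <- iota 0 t.+1) F i = op (\big[op/idx]_(i <- iota 0 t) F i) (F t).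
Proof. by rewrite -addn1 iotaD big_cat big_seq1. Qed.

Section Independence.
Variables (R : realType) (d : measure_display) (T : measurableType d).
Variable P : probability T R.

Lemma lambda_system_independent (W : set T) : measurable W ->
  lambda_system setT [set E | measurable E /\ P (E `&` W) = (P E * P W)%E].
Proof.
move=> mW; have Pfin A : measurable A -> P A \is a fin_num by exact: fin_num_measure.
have Plty A : measurable A -> (P A < +oo)%E by move=> mA; rewrite ltey_eq Pfin.
split=> //.
- by split=> //; rewrite setTI probability_setT mul1e.
- move=> X Y YX [mX PXW] [mY PYW]; split; first exact: measurableD.
  have -> : (X `\` Y) `&` W = (X `&` W) `\` (Y `&` W).
    by apply/seteqP; split=> w /=; tauto.
  have mXW := measurableI _ _ mX mW; have mYW := measurableI _ _ mY mW.
  rewrite measureD ?Plty // (setIidr (setSI YX)) measureD ?Plty // (setIidr YX).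
  rewrite -[LHS]/(P (X `&` W) - P (Y `&` W))%E PXW PYW.
  by rewrite muleBl ?Pfin // fin_num_adde_defr ?Pfin.
- move=> F ndF PF; have mF i : measurable (F i) by case: (PF i).
  have mFW i : measurable (F i `&` W) by exact: measurableI.
  split; first exact: bigcupT_measurable.
  have cvgFW : (fun i => P (F i `&` W)) @ \oo --> P (\bigcup_i F i `&` W).
    rewrite setI_bigcupl; apply: nondecreasing_cvg_mu => //.
      exact: bigcupT_measurable.
    by move=> a b ab; apply/subsetPset; apply: setSI; apply/subsetPset; exact: ndF.
  have cvgF : (fun i => P (F i) * P W)%E @ \oo --> (P (\bigcup_i F i) * P W)%E.
    apply: cvgeM; last exact: cvg_cst.
      by rewrite mule_def_fin ?Pfin //; exact: bigcupT_measurable.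
    by apply: nondecreasing_cvg_mu => //; exact: bigcupT_measurable.
  have PFW : (fun i => P (F i `&` W)) = (fun i => P (F i) * P W)%E.
    by apply: funext => i; case: (PF i).
  by rewrite PFW in cvgFW; rewrite -(cvg_lim _ cvgFW) // -(cvg_lim _ cvgF).
Qed.

End Independence.

Section FiniteValuedIntegral.
Variables (R : realType) (d : measure_display) (T : measurableType d).
Variable mu : measure T R.

Lemma integral_finite_valued (Z : T -> R) (vs : seq R) (A : set T) :
  measurable A -> (forall w, Z w \in vs) -> (forall v, measurable (Z @^-1` [set v])) ->
  (\int[mu]_w (Num.max (Z w) 0 * \1_A w)%:E =
   \sum_(v <- undup vs) (Num.max v 0)%:E * mu (Z @^-1` [set v] `&` A))%E.
Proof.
move=> mA Zvs mZ; have mZA v := measurableI _ _ (mZ v) mA.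
have ZE w : (Num.max (Z w) 0 * \1_A w)%:E =
    (\sum_(v <- undup vs) (Num.max v 0 * \1_(Z @^-1` [set v] `&` A) w)%:E)%E.
  rewrite (bigD1_seq (Z w)) ?mem_undup ?undup_uniq //= big1_seq ?adde0.
    by rewrite !indicE in_setI (_ : w \in Z @^-1` _ = true) //; exact: mem_set.
  move=> v /andP[vZ _]; rewrite indicE memNset ?mulr0 // => -[/= Zv _].
  by rewrite Zv eqxx in vZ.
under eq_integral do rewrite ZE.
rewrite ge0_integral_sum //; first last.
- by move=> v w _; rewrite lee_fin mulr_ge0 ?le_max ?lexx ?orbT.
- move=> v; apply/measurable_EFinP/measurable_funM; first exact: measurable_cst.
  exact: measurable_indic.
apply: eq_bigr => v _; under eq_integral do rewrite EFinM.
rewrite ge0_integralZl //= ?integral_indic ?setIT ?lee_fin ?le_max ?lexx ?orbT //.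
by apply/measurable_EFinP; exact: measurable_indic.
Qed.

End FiniteValuedIntegral.

Section PastOfUniforms.
Variables (R : realType) (d : measure_display) (T : measurableType d).
Variables (P : probability T R) (U : nat -> T -> R).
Hypothesis mU : forall i, measurable_fun setT (U i).
Hypothesis indU : mutually_independent P U.

Definition past_cylinders (t : nat) : set (set T) :=
  [set E | exists2 B : nat -> set R, (forall i, measurable (B i)) &
     E = \big[setI/setT]_(i <- iota 0 t) (U i @^-1` B i)].

Lemma measurable_bigsetI_preimage (s : seq nat) (B : nat -> set R) :
  (forall i, measurable (B i)) ->
  measurable (\big[setI/setT]_(i <- s) (U i @^-1` B i)).
Proof.
move=> mB; elim: s => [|i s IH]; first by rewrite big_nil.
by rewrite big_cons; apply: measurableI => //; exact: measurableT_preimage.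
Qed.

Lemma past_cylinders_setI_closed t : setI_closed (past_cylinders t).
Proof.
move=> _ _ [B1 mB1 ->] [B2 mB2 ->].
exists (fun i => B1 i `&` B2 i) => [i|]; first exact: measurableI.
apply/seteqP; split=> w.
  by move=> [/in_bigsetI B1w /in_bigsetI B2w]; apply/in_bigsetI => i si; split;
    [exact: B1w|exact: B2w].
by move=> /in_bigsetI Bw; split; apply/in_bigsetI => i /Bw[].
Qed.

Lemma past_measurable t : <<s past_cylinders t >> `<=` measurable.
Proof.
apply: smallest_sub; first exact: sigma_algebra_measurable.
by move=> _ [B mB ->]; exact: measurable_bigsetI_preimage.
Qed.

Lemma measurable_U_past t i : (i < t)%N ->
  measurable_fun (T := g_sigma_algebraType (past_cylinders t)) setT (U i).
Proof.
move=> it _ B mB; rewrite setTI; apply: sub_sigma_algebra.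
exists (fun j => if j == i then B else setT) => [j|]; first by case: eqP.
apply/seteqP; split=> w.
  by move=> Bw; apply/in_bigsetI => j _; case: eqP => [->|].
by move/in_bigsetI => /(_ i); rewrite mem_iota it eqxx; apply.
Qed.

Lemma past_independent t (B : set R) : measurable B ->
  forall E, <<s past_cylinders t >> E ->
  P (E `&` U t @^-1` B) = (P E * P (U t @^-1` B))%E.
Proof.
move=> mB; set W := U t @^-1` B; have mW : measurable W by exact: measurableT_preimage.
suff : <<s past_cylinders t >> `<=` [set E | measurable E /\ P (E `&` W) = (P E * P W)%E].
  by move=> sub E /sub[].
apply: lambda_system_subset => //; first exact: past_cylinders_setI_closed.
  exact: lambda_system_independent.
move=> _ [BB mBB ->]; split; first exact: measurable_bigsetI_preimage.
pose B' i := if i == t then B else BB i.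
have mB' i : measurable (B' i) by rewrite /B'; case: eqP.
have B'E : {in iota 0 t, forall i, U i @^-1` B' i = U i @^-1` BB i}.
  by move=> i; rewrite mem_iota /B' => /andP[_ /ltn_eqF->].
have := indU (iota_uniq 0 t.+1) (fun i _ => mB' i).
rewrite !big_iotaSr /B' eqxx -/W.
rewrite (eq_big_seq _ B'E) (eq_big_seq _ (fun i si => congr1 P (B'E i si))).
by rewrite indU ?iota_uniq.
Qed.

Lemma integral_indic_independent t (Z : T -> R) (vs : seq R) (B : set R) :
  measurable B -> (forall w, Z w \in vs) -> (forall w, 0 <= Z w) ->
  measurable_fun (T := g_sigma_algebraType (past_cylinders t)) setT Z ->
  (\int[P]_w (Z w * \1_(U t @^-1` B) w)%:E =
   \int[P]_w (Z w)%:E * P (U t @^-1` B))%E.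
Proof.
move=> mB Zvs Z0 mZ.
have pastZ v : <<s past_cylinders t >> (Z @^-1` [set v]).
  by rewrite -[_ @^-1` _]setTI; exact: mZ.
have mZv v : measurable (Z @^-1` [set v]) by exact: past_measurable.
have ZE (A : set T) w : Z w * \1_A w = Num.max (Z w) 0 * \1_A w by rewrite max_l.
under eq_integral do rewrite ZE.
rewrite (integral_finite_valued _ (measurableT_preimage (mU t) mB) Zvs) //.
rewrite [X in _ = (X * _)%E](eq_integral (fun w => (Num.max (Z w) 0 * \1_setT w)%:E));
  last by move=> w _; rewrite -ZE indicT mulr1.
rewrite (integral_finite_valued _ measurableT Zvs) // ge0_sume_distrl; last first.
  by move=> v _; rewrite mule_ge0 // lee_fin le_max lexx orbT.
by apply: eq_bigr => v _; rewrite setIT -muleA; congr (_ * _)%E; exact: past_independent.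
Qed.

End PastOfUniforms.

Lemma uniform01_itv (R : realType) (d : measure_display) (T : measurableType d)
    (P : probability T R) (X : T -> R) (a b : R) :
  uniform01 P X -> 0 <= a -> a < b -> b <= 1 ->
  P (X @^-1` `[a, b]) = (b - a)%:E.
Proof.
move=> unifX a0 ab b1; rewrite unifX; last exact: measurable_itv.
rewrite /uniform_prob integral_uniform_pdf setIidl; last first.
  by move=> x /=; rewrite !in_itv /= => /andP[? ?]; apply/andP; split; lra.
rewrite (eq_integral (cst 1%:E)); last first.
  move=> x; rewrite inE /= in_itv /= => /andP[? ?].
  by rewrite /uniform_pdf ifT ?subr0 ?invr1 //; apply/andP; split; lra.
rewrite integral_cst /=; last exact: measurable_itv.
by rewrite mul1e lebesgue_measure_itv /= lte_fin ab -EFinD.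
Qed.

(** * The potential martingale *)

Section PotentialMartingale.
Variables (R : realType) (d : measure_display) (T : measurableType d).
Variables (P : probability T R) (U : nat -> T -> R).
Hypothesis mU : forall i, measurable_fun setT (U i).
Hypothesis unifU : forall i, uniform01 P (U i).
Hypothesis indU : mutually_independent P U.
Variables (xc y : R) (n : nat).

Definition potential (p : nat * nat) : R := (3/4) ^+ p.1 * (7/8) ^+ (n - (p.1 + p.2)).

Definition counted_state (q : nat * nat * bool) : bool := q.2 && (q.1.1 + q.1.2 < n)%N.

Definition potential_at t w := potential (state xc y U n t w).1.
Definition potential_counted t w :=
  if counted_state (state xc y U n t w) then potential_at t w else 0.
Definition potential_idle t w :=
  if counted_state (state xc y U n t w) then 0 else potential_at t w.

Lemma potential_ge0 p : 0 <= potential p.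
Proof. by rewrite mulr_ge0 // exprn_ge0. Qed.

Lemma potential_counted_values t w : potential_counted t w \in
  0 :: [seq potential (a, b) | a <- iota 0 n.+1, b <- iota 0 n.+1].
Proof.
rewrite /potential_counted /counted_state.
case: ifP => [/andP[_ sum_n]|_]; last exact: mem_head.
apply/mem_behead/allpairsP; rewrite /potential_at; move: sum_n.
case: (state xc y U n t w).1 => a b sum_n; exists (a, b).
by split; rewrite // mem_iota /=; move: sum_n => /=; lia.
Qed.

Lemma potential_at_ge0 t w : 0 <= potential_at t w. Proof. exact: potential_ge0. Qed.

Lemma potential_counted_ge0 t w : 0 <= potential_counted t w.
Proof. by rewrite /potential_counted; case: ifP => _; rewrite ?potential_at_ge0. Qed.

Lemma potential_idle_ge0 t w : 0 <= potential_idle t w.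
Proof. by rewrite /potential_idle; case: ifP => _; rewrite ?potential_at_ge0. Qed.

Lemma potential_at_split t w :
  potential_at t w = potential_idle t w + potential_counted t w.
Proof.
by rewrite /potential_idle /potential_counted; case: ifP => _; rewrite ?add0r ?addr0.
Qed.

(* At a counted y-split the potential is multiplied by (3/4)/(7/8) = 6/7 if the split is
   balanced and by 1/(7/8) = 8/7 otherwise. *)
Lemma potential_atS t w : potential_at t.+1 w =
  potential_idle t w + potential_counted t w * (if balanced (U t w) then 6/7 else 8/7).
Proof.
rewrite /potential_idle /potential_counted /potential_at /state /counted_state /=.
case: (tally _ _ _ _ t) => a b /=.
case: ifP => [/andP[_ ab]|_]; last by rewrite mul0r addr0.
have [m m_eq] : exists m, (n - (a + b) = m.+1)%N by exists (n - (a + b)).-1; lia.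
rewrite add0r /potential /= m_eq; case: balanced => /=.
  by rewrite (_ : n - _ = m)%N; [rewrite !exprS; field|lia].
by rewrite (_ : n - _ = m)%N; [rewrite exprS; field|lia].
Qed.

Lemma measurable_fibres_stateU t : measurable_fibres (state xc y U n t).
Proof. exact: measurable_fibres_state (fun i _ => mU i). Qed.

Lemma measurable_potential_at t : measurable_fun setT (potential_at t).
Proof.
apply: (measurable_fun_comp_fibres (fun q => potential q.1) (a := state xc y U n t)).
exact: measurable_fibres_stateU.
Qed.

Lemma measurable_potential_idle t : measurable_fun setT (potential_idle t).
Proof.
apply: (measurable_fun_comp_fibres (fun q => if counted_state q then 0 else potential q.1)
  (a := state xc y U n t)).
exact: measurable_fibres_stateU.
Qed.

Lemma measurable_potential_counted t : measurable_fun setT (potential_counted t).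
Proof.
apply: (measurable_fun_comp_fibres (fun q => if counted_state q then potential q.1 else 0)
  (a := state xc y U n t)).
exact: measurable_fibres_stateU.
Qed.

Lemma measurable_potential_counted_past t :
  measurable_fun (T := g_sigma_algebraType (past_cylinders U t)) setT (potential_counted t).
Proof.
apply: (measurable_fun_comp_fibres (fun q => if counted_state q then potential q.1 else 0)
  (a := @state _ _ (g_sigma_algebraType (past_cylinders U t)) xc y U n t)).
exact: measurable_fibres_state (@measurable_U_past _ _ _ U t).
Qed.

Lemma measurable_potential_counted_indic t (A : set T) : measurable A ->
  measurable_fun setT (fun w => (potential_counted t w * \1_A w)%:E).
Proof.
move=> mA; apply/measurable_EFinP/measurable_funM.
  exact: measurable_potential_counted.
exact: measurable_indic.
Qed.

Lemma P_balanced t : P (U t @^-1` `[4^-1, 3/4]) = (2^-1)%:E.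
Proof. by rewrite uniform01_itv //; [congr EFin|..]; lra. Qed.

Lemma P_unbalanced t : P (U t @^-1` ~` `[4^-1, 3/4]) = (2^-1)%:E.
Proof.
rewrite -preimage_setC probability_setC; last exact: measurableT_preimage.
by rewrite P_balanced -EFinB; congr EFin; lra.
Qed.

Lemma integral_potential_counted_factor t :
  (\int[P]_w (potential_counted t w * (if balanced (U t w) then 6/7 else 8/7))%:E =
   \int[P]_w (potential_counted t w)%:E)%E.
Proof.
pose B : set R := `[4^-1, 3/4]%classic; have mB : measurable B by exact: measurable_itv.
have mUB := measurableT_preimage (mU t) mB.
have mUBc := measurableT_preimage (mU t) (measurableC mB).
have factorE w : (potential_counted t w * (if balanced (U t w) then 6/7 else 8/7))%:E =
    ((6/7)%:E * (potential_counted t w * \1_(U t @^-1` B) w)%:E +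
     (8/7)%:E * (potential_counted t w * \1_(U t @^-1` ~` B) w)%:E)%E.
  have inB : (w \in U t @^-1` B) = balanced (U t w).
    by apply/idP/idP => [/set_mem|bw];
      [rewrite /B /= in_itv|apply/mem_set; rewrite /B /= in_itv].
  rewrite -!EFinM -EFinD !indicE preimage_setC in_setC inB.
  by case: balanced; congr EFin; rewrite /=; ring.
have ge0 (A : set T) w : (0 <= (potential_counted t w * \1_A w)%:E)%E.
  by rewrite lee_fin mulr_ge0 ?potential_counted_ge0.
under eq_integral do rewrite factorE.
rewrite ge0_integralD //; first last.
- by apply: measurable_funeM; exact: measurable_potential_counted_indic.
- by move=> w _; rewrite mule_ge0.
- by apply: measurable_funeM; exact: measurable_potential_counted_indic.
- by move=> w _; rewrite mule_ge0.
rewrite !ge0_integralZl //; try exact: measurable_potential_counted_indic.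
have indep := integral_indic_independent mU indU _ (potential_counted_values t)
  (potential_counted_ge0 t)
  (@measurable_potential_counted_past t).
rewrite !indep ?P_balanced ?P_unbalanced //; last exact: measurableC.
set E := (\int[P]_w (potential_counted t w)%:E)%E.
rewrite !(muleCA _ E) -!EFinM -ge0_muleDr ?lee_fin; [|lra|lra].
by rewrite -EFinD (_ : _ + _ = 1) ?mule1 //; lra.
Qed.

Lemma integral_potential_atS t :
  (\int[P]_w (potential_at t.+1 w)%:E = \int[P]_w (potential_at t w)%:E)%E.
Proof.
have mEFin (f : T -> R) : measurable_fun setT f -> measurable_fun setT (fun w => (f w)%:E).
  by move=> mf; apply/measurable_EFinP.
have mfactor : measurable_fun setT (fun w => if balanced (U t w) then 6/7 else 8/7 : R).
  apply: (measurable_fun_comp_fibres (fun b : bool => if b then 6/7 else 8/7 : R)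
    (a := fun w => balanced (U t w))).
  exact: measurable_balanced.
under eq_integral do rewrite potential_atS EFinD.
rewrite ge0_integralD //; first last.
- exact/mEFin/measurable_funM/mfactor/measurable_potential_counted.
- by move=> w _; rewrite lee_fin mulr_ge0 ?potential_counted_ge0 //; case: ifP.
- exact/mEFin/measurable_potential_idle.
- by move=> w _; rewrite lee_fin potential_idle_ge0.
rewrite integral_potential_counted_factor.
rewrite [RHS](eq_integral
  (fun w => (potential_idle t w)%:E + (potential_counted t w)%:E)%E);
  last by move=> w _; rewrite potential_at_split EFinD.
rewrite ge0_integralD //.
- by move=> w _; rewrite lee_fin potential_idle_ge0.
- exact/mEFin/measurable_potential_idle.
- by move=> w _; rewrite lee_fin potential_counted_ge0.
- exact/mEFin/measurable_potential_counted.
Qed.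

Lemma integral_potential_at t : (\int[P]_w (potential_at t w)%:E = ((7/8) ^+ n)%:E)%E.
Proof.
elim: t => [|t IH]; last by rewrite integral_potential_atS.
rewrite (eq_integral (cst ((7/8) ^+ n)%:E)); last first.
  by move=> w _; rewrite /potential_at /potential /= expr0 mul1r subn0.
by rewrite integral_cst // -[RHS]mule1; congr (_ * _)%E; exact: probability_setT.
Qed.

End PotentialMartingale.

Section TailBound.
Variables (R : realType) (d : measure_display) (T : measurableType d).
Variables (P : probability T R) (U : nat -> T -> R).
Hypothesis mU : forall i, measurable_fun setT (U i).
Hypothesis unifU : forall i, uniform01 P (U i).
Hypothesis indU : mutually_independent P U.
Variables (xc y : R) (n : nat).
Hypothesis xc0 : 0 < xc.

Lemma xc_lt_potential_at N w : (forall i, (i < N)%N -> 0 <= U i w <= 1) ->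
  (n < Ky xc y (fun i => U i w) N)%N -> xc < potential_at U xc y n N w.
Proof.
move=> u01 nK; have [sum_n lt_xc] := tally_full xc0 u01 nK.
by rewrite /potential_at /potential /state /= sum_n subnn expr0 mulr1.
Qed.

Lemma markov_potential_at N :
  (P [set w | (xc <= potential_at U xc y n N w)%R] <= ((7/8) ^+ n / xc)%:E)%E.
Proof.
rewrite EFinM lee_pdivlMr // muleC -(integral_potential_at mU unifU indU xc y n N).
have absE w : `|(potential_at U xc y n N w)%:E|%E = (potential_at U xc y n N w)%:E.
  by rewrite gee0_abs // lee_fin potential_at_ge0.
have -> : [set w | (xc <= potential_at U xc y n N w)%R] =
    [set w | (xc%:E <= `|(potential_at U xc y n N w)%:E|)%E].
  by apply: eq_set => w; rewrite absE lee_fin.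
rewrite (eq_integral (fun w => `|(potential_at U xc y n N w)%:E|%E));
  last by move=> w _; rewrite absE.
have := le_integral_abse P measurableT
  (proj2 (measurable_EFinP _ _) (measurable_potential_at mU xc y n N)) xc0.
by rewrite setTI.
Qed.

Lemma P_Ky_gt N :
  (P [set w | (n < Ky xc y (fun i => U i w) N)%N] <= ((7/8) ^+ n / xc)%:E)%E.
Proof.
set good := \big[setI/setT]_(i <- iota 0 N) (U i @^-1` `[0, 1]%classic).
have mgood : measurable good.
  by apply: measurable_bigsetI_preimage => // i; exact: measurable_itv.
have Pgood : P (~` good) = 0%E.
  rewrite probability_setC // indU ?iota_uniq //.
  by rewrite big1 ?subee // => i _; rewrite uniform01_itv // subr0.
have mbad : measurable [set w | (n < Ky xc y (fun i => U i w) N)%N].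
  exact: (measurable_fibres_comp (leq n.+1) (measurable_Ky xc y (fun i _ => mU i)) true).
have mpot : measurable [set w | xc <= potential_at U xc y n N w].
  rewrite -[X in measurable X]setTI; apply: measurable_fun_le => //.
  exact: measurable_potential_at.
apply: le_trans (markov_potential_at N); rewrite -[X in (_ <= X)%E]adde0 -Pgood.
apply: le_trans (measureU2 _ mpot (measurableC mgood)).
apply: le_measure; rewrite ?inE //; first exact: measurableU mpot (measurableC mgood).
move=> w nK; have [goodw|] := pselect (good w); last by right.
left; apply/ltW/xc_lt_potential_at => // i iN; move/in_bigsetI: goodw => /(_ i).
by rewrite mem_iota iN /= in_itv; apply.
Qed.

End TailBound.

Lemma geometric_tail_le_powR (R : realType) (A xc : R) (n : nat) :
  0 < A -> 0 < xc < 1 -> (A + 1) / ln (8/7 : R) * ln (1 / xc) < n.+1%:R ->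
  (7/8) ^+ n / xc <= 8/7 * xc `^ A.
Proof.
move=> A0 /andP[xc0 xc1] n_gt.
set L := ln (8/7 : R); set l := ln (1 / xc).
have L0 : 0 < L by apply: ln_gt0; lra.
have expL : expR L = 8/7 by rewrite lnK // posrE; lra.
have expl : expR l = xc^-1 by rewrite lnK ?div1r // posrE invr_gt0.
have ln_xc : ln xc = - l by rewrite /l div1r lnV ?opprK // posrE.
have -> : 7/8 = expR (- L) :> R by rewrite expRN expL; field.
rewrite -expRM_natl -expl -expRD /powR (gt_eqF xc0) ln_xc -expL -expRD ler_expR.
have : (A + 1) * l < n.+1%:R * L by move: n_gt; rewrite mulrAC ltr_pdivrMr.
by rewrite -natr1; nra.
Qed.

Theorem lemma1 (R : realType) (d : measure_display) (T : measurableType d)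
  (P : probability T R) (U : nat -> T -> R)
  (mU : forall i, measurable_fun setT (U i))
  (unifU : forall i, uniform01 P (U i))
  (indU : mutually_independent P U)
  (y : R) (hy : 0 < y < 1) :
  forall A : R, 0 < A ->
  exists C D : R, 0 < C /\ 0 < D /\
    forall xc : R, 0 < xc < 1 ->
      forall N : nat,
        (P [set w | (C * ln (1 / xc) < (Ky xc y (fun i => U i w) N)%:R)%R]
        <= (D * xc `^ A)%:E)%E.
Proof.
move=> A A0; have L0 : 0 < ln (8/7 : R) by apply: ln_gt0; lra.
have C0 : 0 < (A + 1) / ln (8/7 : R) by apply: divr_gt0 => //; lra.
exists ((A + 1) / ln (8/7 : R)), (8/7); do 2 (split; first by [|lra]).
move=> xc /andP[xc0 xc1] N.
have l0 : 0 <= ln (1 / xc) by apply/ltW/ln_gt0; rewrite ltr_pdivlMr //; lra.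
set n := Num.truncn ((A + 1) / ln (8/7 : R) * ln (1 / xc)).
have -> : [set w | (A + 1) / ln (8/7) * ln (1 / xc) < (Ky xc y (fun i => U i w) N)%:R] =
    [set w | (n < Ky xc y (fun i => U i w) N)%N].
  by apply: eq_set => w; rewrite truncn_lt_nat // mulr_ge0 // ltW.
apply: le_trans (P_Ky_gt mU unifU indU y n xc0 N) _.
by rewrite lee_fin; apply: geometric_tail_le_powR; rewrite ?xc0 ?truncnS_gt.
Qed.
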